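(* Let $Q$ be a convex $k$-gon in $\mathbb{R}^2$ containing the origin in its interior, with edges $e_0,\dots,e_{k-1}$. Let $p,q\in\mathbb{R}^2$ be two distinct points such that the segment $pq$ is not parallel to any edge or diagonal of $Q$. Then an edgelet $g$ with label $\psi(g)=(e_i,e_j)$ appears on the bisector $b_{pq}$ if and only if there is an oriented line parallel to $\vec{pq}$ (and oriented in the direction of $\vec{pq}$) that crosses $\partial Q$ at the relative interiors of $e_i$ and $e_j$, in this order.
   Context: A homothetic placement of $Q$ is a set $Q'=x+\lambda Q$ with $x\in\mathbb{R}^2$ (its center) and $\lambda>0$; edges of $Q'$ are identified with the corresponding edges of $Q$. For $x,y\in\mathbb{R}^2$, $d_Q(x,y)=\min\{\lambda\ge 0: y\in x+\lambda Q\}$. The bisector $b_{pq}$ is the set $\{x: d_Q(x,p)=d_Q(x,q)\}$, equivalently the locus of centers of homothetic placements of $Q$ whose boundary contains both $p$ and $q$. An edgelet of $b_{pq}$ with label $(e_i,e_j)$ is a maximal segment of $b_{pq}$ consisting of centers of placements $Q'$ for which $p$ lies in the relative interior of the edge $e_i$ of $Q'$ and $q$ lies in the relative interior of the edge $e_j$ of $Q'$. *)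

From HB Require Import structures.
From mathcomp Require Import all_boot all_order all_algebra.
Set Implicit Arguments. Unset Strict Implicit. Unset Printing Implicit Defensive.
Import Order.TTheory GRing.Theory Num.Theory.
Local Open Scope ring_scope.

Section Plane.
Variable R : realFieldType.

Definition pt := (R * R)%type.
Definition padd (a b : pt) : pt := (a.1 + b.1, a.2 + b.2).
Definition psub (a b : pt) : pt := (a.1 - b.1, a.2 - b.2).
Definition pscale (c : R) (a : pt) : pt := (c * a.1, c * a.2).
Definition cross (a b : pt) : R := a.1 * b.2 - a.2 * b.1.
(* orientation of the triple (a,b,c): > 0 iff counterclockwise *)
Definition orient (a b c : pt) : R := cross (psub b a) (psub c a).

Variable k : nat.
Definition nexti (i : 'I_k) : 'I_k :=
  match k as n return 'I_n -> 'I_n with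
  | 0 => fun i => i
  | n.+1 => fun i => inord ((i.+1) %% n.+1)
  end i.

(* The polygon Q is given by its vertices v_0, ..., v_{k-1} listed
   counterclockwise; edge e_i is the segment [v_i, v_{i+1 mod k}]. *)
Variable v : 'I_k -> pt.

Definition convex_ccw_polygon : Prop :=
  forall (i l : 'I_k), l != i -> l != nexti i ->
    0 < orient (v i) (v (nexti i)) (v l).

Definition origin_in_interior : Prop :=
  forall i : 'I_k, 0 < orient (v i) (v (nexti i)) (0, 0).

Definition Qset (x : pt) : Prop :=
  forall i : 'I_k, 0 <= orient (v i) (v (nexti i)) x.

Definition edge_relint (i : 'I_k) (y : pt) : Prop :=
  exists t : R, 0 < t /\ t < 1 /\ y = padd (v i) (pscale t (psub (v (nexti i)) (v i))).

Definition in_placement (x : pt) (lam : R) (y : pt) : Prop :=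
  exists z, Qset z /\ y = padd x (pscale lam z).

Definition dQ_is (x y : pt) (lam : R) : Prop :=
  0 <= lam /\ in_placement x lam y /\
  forall mu, 0 <= mu -> in_placement x mu y -> lam <= mu.

Definition bisector (p q : pt) (x : pt) : Prop :=
  exists lam, dQ_is x p lam /\ dQ_is x q lam.

Definition labeled_center (p q : pt) (i j : 'I_k) (x : pt) : Prop :=
  exists lam, 0 < lam /\
    (exists y, edge_relint i y /\ p = padd x (pscale lam y)) /\
    (exists z, edge_relint j z /\ q = padd x (pscale lam z)).

Definition is_segment (g : pt -> Prop) : Prop :=
  (exists x, g x) /\
  (forall a b, g a -> g b -> forall t, 0 <= t -> t <= 1 ->
      g (padd a (pscale t (psub b a)))) /\
  (forall a b c, g a -> g b -> g c -> orient a b c = 0).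

Definition edgelet (p q : pt) (i j : 'I_k) (g : pt -> Prop) : Prop :=
  is_segment g /\
  (forall x, g x -> bisector p q x /\ labeled_center p q i j x) /\
  (forall g' : pt -> Prop, is_segment g' ->
      (forall x, g' x -> bisector p q x /\ labeled_center p q i j x) ->
      (forall x, g x -> g' x) -> forall x, g' x -> g x).

Definition edgelet_appears (p q : pt) (i j : 'I_k) : Prop :=
  exists g, edgelet p q i j g.

Definition oriented_line_crosses (p q : pt) (i j : 'I_k) : Prop :=
  exists a b tau, edge_relint i a /\ edge_relint j b /\ 0 < tau /\
    b = padd a (pscale tau (psub q p)).

Definition general_position (p q : pt) : Prop :=
  forall (i l : 'I_k), i != l -> cross (psub q p) (psub (v l) (v i)) != 0.

End Plane.

From HB Require Import structures.
From mathcomp Require Import all_boot all_order all_algebra.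
From mathcomp Require Import ring lra zify.
Import Order.TTheory GRing.Theory Num.Theory.
Local Open Scope ring_scope.

(* If [x + lam Q] has [p] on its edge [e_i] and [q] on its edge [e_j], then
   [q - p = lam (z - y)] with [y], [z] in the open edges, so [1/lam] scales
   [q - p] to an oriented chord of [Q] from [e_i] to [e_j]; conversely a chord
   [b = a + tau (q - p)] gives the center [p - a/tau] with [lam = 1/tau].
   For the converse one shows that the set of all such centers is an edgelet.
   Its points lie on the bisector, since every edge spans a supporting line of
   [Q] having the origin strictly on its inner side, so no smaller homothet can
   reach [p] or [q].  It is convex, because the cone spanned by an open edge is
   convex.  It is collinear, because eliminating [lam] between the two edge-line
   equations leaves one affine equation in the center; general position makes
   the normal of that equation nonzero, as its cross product with [q - p] is
   negative. *)

Section PlaneAlgebra.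
Context {R : realFieldType}.
Implicit Types (a b c d p q u w x y : pt R) (s r t lam : R).

Lemma paddI x : injective (padd x).
Proof. by case: x => x1 x2 [u1 u2] [w1 w2] [/addrI -> /addrI ->]. Qed.

Lemma crossC u w : cross u w = - cross w u.
Proof. by case: u w => u1 u2 [w1 w2]; rewrite /cross /=; ring. Qed.

Lemma orient_segment a b c w t :
  orient a b (padd c (pscale t (psub w c))) = (1 - t) * orient a b c + t * orient a b w.
Proof.
by case: a b c w => [a1 a2] [b1 b2] [c1 c2] [w1 w2];
  rewrite /orient /cross /padd /pscale /psub /=; ring.
Qed.

Lemma orient_translate a b c w t :
  orient a b (padd c (pscale t w)) = orient a b c + t * cross (psub b a) w.
Proof.
by case: a b c w => [a1 a2] [b1 b2] [c1 c2] [w1 w2];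
  rewrite /orient /cross /padd /pscale /psub /=; ring.
Qed.

Lemma orient_scale a b u t :
  orient a b (pscale t u) = t * orient a b u + (1 - t) * orient a b (0, 0).
Proof.
by case: a b u => [a1 a2] [b1 b2] [u1 u2];
  rewrite /orient /cross /pscale /psub /=; ring.
Qed.

Lemma orient_tail0 a b : orient a b a = 0.
Proof. by case: a b => [a1 a2] [b1 b2]; rewrite /orient /cross /psub /=; ring. Qed.

Lemma orient_head0 a b : orient a b b = 0.
Proof. by case: a b => [a1 a2] [b1 b2]; rewrite /orient /cross /psub /=; ring. Qed.

Lemma orient_on_line a b s : orient a b (padd a (pscale s (psub b a))) = 0.
Proof. by rewrite orient_segment orient_tail0 orient_head0 !mulr0 addr0. Qed.

Lemma cross_eq0_trans {w u1 u2} :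
  w != (0, 0) -> cross w u1 = 0 -> cross w u2 = 0 -> cross u1 u2 = 0.
Proof.
case: w u1 u2 => [w1 w2] [a1 a2] [b1 b2]; rewrite /cross /= => nz0 ha hb.
have E1 : w1 * (a1 * b2 - a2 * b1) = a1 * (w1 * b2 - w2 * b1) - b1 * (w1 * a2 - w2 * a1).
  by ring.
have E2 : w2 * (a1 * b2 - a2 * b1) = a2 * (w1 * b2 - w2 * b1) - b2 * (w1 * a2 - w2 * a1).
  by ring.
rewrite ha hb !mulr0 subrr in E1 E2.
move/eqP: E1; rewrite mulf_eq0 => /orP[/eqP w10|/eqP //].
move/eqP: E2; rewrite mulf_eq0 => /orP[/eqP w20|/eqP //].
by move: nz0; rewrite w10 w20 eqxx.
Qed.

Lemma pos_convex_comb t s r :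
  0 <= t -> t <= 1 -> 0 < s -> 0 < r -> 0 < (1 - t) * s + t * r.
Proof. by move=> *; nra. Qed.

Lemma padd_convex_comb p x1 x2 u1 u2 t :
  p = padd x1 u1 -> p = padd x2 u2 ->
  p = padd (padd x1 (pscale t (psub x2 x1))) (padd (pscale (1 - t) u1) (pscale t u2)).
Proof.
case: p x1 x2 u1 u2 => [p1 p2] [x1 x2] [y1 y2] [u1 u2] [w1 w2].
rewrite /padd /pscale /psub /= => -[-> ->] [e1 e2].
have -> : w1 = x1 + u1 - y1 by lra.
have -> : w2 = x2 + u2 - y2 by lra.
by congr (_, _); ring.
Qed.

(* The center [x] of a placement with [p] on the line [ab] and [q] on the line
   [cd] satisfies [center_form a b c d p q x = 0]: this is what remains of the
   two line equations after eliminating the homothety ratio. *)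
Definition center_form a b c d p q x : R :=
  cross (psub d c) c * cross (psub b a) (psub p x)
  - cross (psub b a) a * cross (psub d c) (psub q x).

Definition center_normal a b c d : pt R :=
  (cross (psub d c) c * (psub b a).1 - cross (psub b a) a * (psub d c).1,
   cross (psub d c) c * (psub b a).2 - cross (psub b a) a * (psub d c).2).

Lemma center_form_eq0 a b c d p q x lam s r :
  p = padd x (pscale lam (padd a (pscale s (psub b a)))) ->
  q = padd x (pscale lam (padd c (pscale r (psub d c)))) ->
  center_form a b c d p q x = 0.
Proof.
move=> -> ->; case: a b c d x => [a1 a2] [b1 b2] [c1 c2] [d1 d2] [x1 x2].
by rewrite /center_form /cross /padd /pscale /psub /=; ring.
Qed.

Lemma cross_center_normal_sub a b c d p q x1 x2 :
  cross (center_normal a b c d) (psub x2 x1)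
  = center_form a b c d p q x1 - center_form a b c d p q x2.
Proof.
case: a b c d p q x1 x2 => [a1 a2] [b1 b2] [c1 c2] [d1 d2] [p1 p2] [q1 q2] [x1 x2] [y1 y2].
by rewrite /center_normal /center_form /cross /psub /=; ring.
Qed.

Lemma cross_center_normal a b c d w :
  cross (center_normal a b c d) w
  = orient a b (0, 0) * cross (psub d c) w - orient c d (0, 0) * cross (psub b a) w.
Proof.
case: a b c d w => [a1 a2] [b1 b2] [c1 c2] [d1 d2] [w1 w2].
by rewrite /center_normal /orient /cross /psub /=; ring.
Qed.

End PlaneAlgebra.

Lemma nexti_neq k (i : 'I_k) : (1 < k)%N -> nexti i != i.
Proof.
case: k i => [[]//|n] i n_gt0; rewrite /nexti.
apply/eqP => /(congr1 val); rewrite /= inordK ?ltn_pmod //.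
have [lt_i1n|] := ltnP i.+1 n.+1; first by rewrite modn_small // => /eqP; rewrite gtn_eqF.
rewrite ltnS => le_ni; have -> : nat_of_ord i = n by have := ltn_ord i; lia.
by rewrite modnn; lia.
Qed.

Section Polygon.
Variables (R : realFieldType) (k : nat) (v : 'I_k -> pt R).
Hypothesis convex_v : convex_ccw_polygon v.
Hypothesis origin_v : origin_in_interior v.

Lemma orient_edge_vertex_ge0 l m : 0 <= orient (v l) (v (nexti l)) (v m).
Proof.
have [->|ml] := eqVneq m l; first by rewrite orient_tail0.
have [->|mnl] := eqVneq m (nexti l); first by rewrite orient_head0.
exact/ltW/convex_v.
Qed.

Lemma edge_relint_Qset {m y} : edge_relint v m y -> Qset v y.
Proof.
move=> [t [t0 [t1 ->]]] l; rewrite orient_segment.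
have := orient_edge_vertex_ge0 l m; have := orient_edge_vertex_ge0 l (nexti m).
by move=> *; nra.
Qed.

Lemma dQ_is_edge {i y lam} x :
  0 < lam -> edge_relint v i y -> dQ_is v x (padd x (pscale lam y)) lam.
Proof.
move=> lam_gt0 iy; split; first exact: ltW.
split; first by exists y; split=> //; exact: edge_relint_Qset iy.
move=> mu mu_ge0 [z [Qz /paddI e]].
have := congr1 (orient (v i) (v (nexti i))) e.
case: iy => [s [_ [_ ->]]]; rewrite !orient_scale orient_on_line mulr0 add0r.
by have := Qz i; have := origin_v i; move=> *; nra.
Qed.

Lemma labeled_center_bisector {p q i j x} :
  labeled_center v p q i j x -> bisector v p q x.
Proof.
move=> [lam [lam_gt0 [[y [iy ->]] [z [jz ->]]]]].
by exists lam; split; [exact: dQ_is_edge iy | exact: dQ_is_edge jz].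
Qed.

Lemma labeled_center_crossing {p q i j x} :
  labeled_center v p q i j x -> oriented_line_crosses v p q i j.
Proof.
move=> [lam [lam_gt0 [[y [iy ep]] [z [jz eq]]]]].
exists y, z, lam^-1; do 2 split=> //; split; first by rewrite invr_gt0.
move: ep eq {iy jz} => -> ->; case: x y z => [x1 x2] [y1 y2] [z1 z2].
rewrite /padd /pscale /psub /=; have lam_neq0 := lt0r_neq0 lam_gt0.
by congr (_, _); field.
Qed.

Lemma crossing_labeled_center {p q i j} :
  oriented_line_crosses v p q i j -> exists x, labeled_center v p q i j x.
Proof.
move=> [a [b [tau [ia [jb [tau_gt0 eb]]]]]].
exists (psub p (pscale tau^-1 a)), tau^-1; split; first by rewrite invr_gt0.
split; [exists a | exists b]; split=> //; rewrite ?eb.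
all: case: a p q {ia jb eb} => [a1 a2] [p1 p2] [q1 q2].
all: rewrite /padd /pscale /psub /=; have tau_neq0 := lt0r_neq0 tau_gt0.
all: by congr (_, _); field.
Qed.

Lemma edge_relint_cone_comb {i y1 y2 lam1 lam2} t :
  0 < lam1 -> 0 < lam2 -> 0 <= t -> t <= 1 ->
  edge_relint v i y1 -> edge_relint v i y2 ->
  exists2 y, edge_relint v i y &
    padd (pscale (1 - t) (pscale lam1 y1)) (pscale t (pscale lam2 y2))
    = pscale ((1 - t) * lam1 + t * lam2) y.
Proof.
move=> lam1_gt0 lam2_gt0 t_ge0 t_le1.
move=> [s1 [s1_gt0 [s1_lt1 ->]]] [s2 [s2_gt0 [s2_lt1 ->]]].
set lam := (1 - t) * lam1 + t * lam2.
set num := (1 - t) * (lam1 * s1) + t * (lam2 * s2).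
have lam_gt0 : 0 < lam by exact: pos_convex_comb.
have num_gt0 : 0 < num by apply: pos_convex_comb => //; exact: mulr_gt0.
have gap_gt0 : 0 < lam - num.
  have -> : lam - num = (1 - t) * (lam1 * (1 - s1)) + t * (lam2 * (1 - s2)).
    by rewrite /lam /num; ring.
  by apply: pos_convex_comb => //; apply: mulr_gt0; lra.
exists (padd (v i) (pscale (num / lam) (psub (v (nexti i)) (v i)))).
  exists (num / lam); split; first exact: divr_gt0.
  by split=> //; rewrite ltr_pdivrMr // mul1r -subr_gt0.
case: (v i) (v (nexti i)) => [a1 a2] [b1 b2].
rewrite /padd /pscale /psub /=; have lam_neq0 := lt0r_neq0 lam_gt0.
by congr (_, _); rewrite /num /lam; field.
Qed.

Lemma labeled_center_convex {p q i j x1 x2 t} :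
  0 <= t -> t <= 1 ->
  labeled_center v p q i j x1 -> labeled_center v p q i j x2 ->
  labeled_center v p q i j (padd x1 (pscale t (psub x2 x1))).
Proof.
move=> t_ge0 t_le1 [lam1 [lam1_gt0 [[y1 [iy1 ep1]] [z1 [jz1 eq1]]]]]
  [lam2 [lam2_gt0 [[y2 [iy2 ep2]] [z2 [jz2 eq2]]]]].
have [y iy ey] := edge_relint_cone_comb t lam1_gt0 lam2_gt0 t_ge0 t_le1 iy1 iy2.
have [z jz ez] := edge_relint_cone_comb t lam1_gt0 lam2_gt0 t_ge0 t_le1 jz1 jz2.
exists ((1 - t) * lam1 + t * lam2); split; first exact: pos_convex_comb.
split; [exists y; split=> // | exists z; split=> //].
  by rewrite -ey; exact: padd_convex_comb.
by rewrite -ez; exact: padd_convex_comb.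
Qed.

Lemma labeled_center_form_eq0 {p q i j x} :
  labeled_center v p q i j x ->
  center_form (v i) (v (nexti i)) (v j) (v (nexti j)) p q x = 0.
Proof.
move=> [lam [_ [[y [[s [_ [_ ey]]] ep]] [z [[r [_ [_ ez]]] eq]]]]].
by apply: center_form_eq0; [rewrite ep ey | rewrite eq ez].
Qed.

Lemma crossing_center_normal_lt0 {p q i j} :
  (1 < k)%N -> general_position v p q -> oriented_line_crosses v p q i j ->
  cross (center_normal (v i) (v (nexti i)) (v j) (v (nexti j))) (psub q p) < 0.
Proof.
move=> k_gt1 gp [a [b [tau [ia [jb [tau_gt0 eb]]]]]].
rewrite cross_center_normal.
set X := cross (psub (v (nexti i)) (v i)) (psub q p).
set Y := cross (psub (v (nexti j)) (v j)) (psub q p).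
have X_neq0 : X != 0.
  by rewrite /X crossC oppr_eq0 gp // eq_sym nexti_neq.
have X_gt0 : 0 < X.
  rewrite lt0r X_neq0 -(pmulr_rge0 _ tau_gt0).
  have := edge_relint_Qset jb i; rewrite eb orient_translate.
  by case: ia => s [_ [_ ->]]; rewrite orient_on_line add0r.
have Y_le0 : Y <= 0.
  rewrite -(pmulr_rle0 _ tau_gt0).
  have := edge_relint_Qset ia j; have := congr1 (orient (v j) (v (nexti j))) eb.
  rewrite orient_translate; case: jb => r [_ [_ ->]]; rewrite orient_on_line.
  by rewrite /Y => *; lra.
by have := origin_v i; have := origin_v j; move=> *; nra.
Qed.

Lemma labeled_center_collinear {p q i j x1 x2 x3} :
  center_normal (v i) (v (nexti i)) (v j) (v (nexti j)) != (0, 0) ->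
  labeled_center v p q i j x1 -> labeled_center v p q i j x2 ->
  labeled_center v p q i j x3 -> orient x1 x2 x3 = 0.
Proof.
move=> normal_neq0 c1 c2 c3; rewrite /orient.
apply: (cross_eq0_trans normal_neq0);
  by rewrite (cross_center_normal_sub _ _ _ _ p q) !labeled_center_form_eq0 ?subrr.
Qed.

Lemma labeled_centers_edgelet {p q i j} :
  (1 < k)%N -> general_position v p q -> oriented_line_crosses v p q i j ->
  edgelet v p q i j (labeled_center v p q i j).
Proof.
move=> k_gt1 gp crosses.
have normal_neq0 : center_normal (v i) (v (nexti i)) (v j) (v (nexti j)) != (0, 0).
  apply: contraTneq (crossing_center_normal_lt0 k_gt1 gp crosses) => ->.
  by rewrite /cross /= !mul0r subrr ltxx.
split; [split; [|split] | split].
- exact: crossing_labeled_center.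
- by move=> x1 x2 c1 c2 t t_ge0 t_le1; exact: (labeled_center_convex t_ge0 t_le1 c1 c2).
- by move=> x1 x2 x3; exact: labeled_center_collinear.
- by move=> x cx; split=> //; exact: labeled_center_bisector cx.
- by move=> g' _ sub_g' _ x /sub_g' [].
Qed.

End Polygon.

Theorem lemma1 (R : realFieldType) (k : nat) (v : 'I_k -> pt R)
    (p q : pt R) (i j : 'I_k) :
  (3 <= k)%N ->
  convex_ccw_polygon v ->
  origin_in_interior v ->
  p <> q ->
  general_position v p q ->
  (edgelet_appears v p q i j <-> oriented_line_crosses v p q i j).
Proof.
move=> k_ge3 convex_v origin_v _ gp; split.
  by move=> [g [[[x gx] _] [centers _]]]; exact: labeled_center_crossing (centers x gx).2.
move=> crosses; exists (labeled_center v p q i j).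
exact: labeled_centers_edgelet (ltnW k_ge3) gp crosses.
Qed.
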